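(* Let $a>0$ satisfy $p(e^a-1) < \frac{q_I}{2}(1-e^{-a})$ and define $\Phi([x_1,\dots,x_I]) = \sum_{i=1}^I e^{a x_i}$. Then there exists $b>0$ such that, for the controlled queue-length vector $X_t = [X^1_t,\dots,X^I_t]$ and $\theta := [0,\dots,0]$, $$\mathbb{E}\left[\Phi(X_{t+1}) - \Phi(X_t)\,\middle|\, X_t\right] \le -b\,\Phi(X_t) \quad \text{whenever } X_t \neq \theta,$$ and this holds regardless of the choice of the admissible controls $\{\nu^i_t\}$.
   Context: Processor sharing model: a single Bernoulli arrival process $\{\xi_t\}$ ($\xi_t\in\{0,1\}$ i.i.d., $P(\xi_t=1)=p\in(0,1)$). There are $I$ queues (servers) with queue lengths $X^i_t\in\{0,1,2,\dots\}$ evolving as $X^i_{t+1} = X^i_t - D^i_{t+1} + \nu^i_t \xi_{t+1}$, where $\nu^i_t\in\{0,1\}$ is a control ($1$ = active: arrivals admitted to queue $i$; $0$ = passive) with $\sum_i \nu^i_t = 1$ for all $t$, and the controls are admissible, i.e. $\nu_t$ is conditionally independent of future departures and arrivals given the past history. Departures follow egalitarian processor sharing: server $i$ has capacity $q_i$; given $X^i_t = x\ge 1$, $D^i_{t+1}\sim \mathrm{Binomial}(x, q_i/x)$, i.e. $P(d \text{ departures}) = \binom{x}{d}(q_i/x)^d(1-q_i/x)^{x-d}$; if $x=0$ there are no departures. Standing assumption: $1>q_1>q_2>\dots>q_I>2p>0$. *)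

From Stdlib Require Export Reals Arith.
Open Scope R_scope.

Fixpoint fsum (n : nat) (f : nat -> R) : R :=
  match n with
  | O => 0
  | S m => fsum m f + f m
  end.

(* Departure law of a processor-sharing queue with capacity qi holding x
   customers: Binomial(x, qi/x) if x >= 1, no departures if x = 0. *)
Definition dep_pmf (x : nat) (qi : R) (d : nat) : R :=
  match x with
  | O => if Nat.eqb d 0 then 1 else 0
  | S _ => C x d * (qi / INR x) ^ d * (1 - qi / INR x) ^ (x - d)
  end.

Definition arr_pmf (p : R) (e : nat) : R :=
  if Nat.eqb e 0 then 1 - p else p.

(* E[ exp(a X^i_{t+1}) | X^i_t = x, nu^i_t = nu ], with X^i_{t+1} = x - D + nu*xi,
   D ~ dep_pmf x qi independent of xi ~ Bernoulli(p). *)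
Definition exp_next_i (a p qi : R) (x nu : nat) : R :=
  fsum (S x) (fun d => fsum 2 (fun e =>
    dep_pmf x qi d * arr_pmf p e * exp (a * INR (x - d + nu * e)))).

(* Phi(x) = sum_{i<I} exp(a x_i); queues are indexed 0..I-1 (paper's 1..I) *)
Definition Phi (a : R) (I : nat) (x : nat -> nat) : R :=
  fsum I (fun i => exp (a * INR (x i))).

(* control indicator: arrivals routed to queue j, i.e. nu^i = [i = j] *)
Definition ctrl (j i : nat) : nat := if Nat.eqb i j then 1%nat else 0%nat.

(* E[ Phi(X_{t+1}) | X_t = x, control routes arrivals to queue j ] *)
Definition exp_next_Phi (a p : R) (q : nat -> R) (I : nat) (x : nat -> nat) (j : nat) : R :=
  fsum I (fun i => exp_next_i a p (q i) (x i) (ctrl j i)).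

(* Given the routing, the queues evolve independently, and for one queue the
   conditional expectation of exp (a X') factors into an arrival factor
   1 - p + p e^(a nu) and a departure factor.  For x >= 1 the departure factor is the
   binomial generating function (u + (1 - u) e^a)^x with u = q_i / x, which is at most
   e^(a x) exp (- q_i (1 - e^(-a))): every non-empty queue shrinks Phi by a fixed
   fraction eps, whatever its length.  Only the queue receiving arrivals can grow, by at
   most p (e^a - 1) e^(a x_j), and the hypothesis on a gives p (e^a - 1) < eps.  Empty
   queues contribute a bounded amount, absorbed since some queue is non-empty. *)

From Stdlib Require Import Reals Lra Lia.
Open Scope R_scope.

Lemma exp_le_compat x y : x <= y -> exp x <= exp y.
Proof. intros [Hlt | ->]; [left; apply exp_increasing | right]; auto. Qed.

Lemma exp_le_1 x : x <= 0 -> exp x <= 1.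
Proof. intros H. rewrite <- exp_0. now apply exp_le_compat. Qed.

Lemma exp_INR_mult n x : exp (INR n * x) = exp x ^ n.
Proof.
  induction n as [|n IH].
  - rewrite Rmult_0_l. apply exp_0.
  - rewrite S_INR, Rmult_plus_distr_r, Rmult_1_l, exp_plus, IH. simpl. ring.
Qed.

Lemma one_sub_exp_opp_gt_half y : 0 < y < 1 -> y / 2 < 1 - exp (- y).
Proof.
  intros Hy. rewrite exp_Ropp.
  pose proof (exp_ineq1_le y). pose proof (exp_pos y).
  assert (Hkey : 1 < exp y * (1 - y / 2)) by nra.
  apply (Rmult_lt_reg_r (exp y)); [lra|].
  rewrite Rmult_minus_distr_r, Rinv_l by lra. lra.
Qed.

Lemma fsum_ext n f g : (forall i, (i < n)%nat -> f i = g i) -> fsum n f = fsum n g.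
Proof.
  induction n as [|n IH]; intros H; simpl; [reflexivity|].
  rewrite IH, H; [reflexivity | lia | intros; apply H; lia].
Qed.

Lemma fsum_le n f g : (forall i, (i < n)%nat -> f i <= g i) -> fsum n f <= fsum n g.
Proof.
  induction n as [|n IH]; intros H; simpl; [lra|].
  assert (fsum n f <= fsum n g) by (apply IH; intros; apply H; lia).
  specialize (H n ltac:(lia)). lra.
Qed.

Lemma fsum_plus n f g : fsum n (fun i => f i + g i) = fsum n f + fsum n g.
Proof. induction n as [|n IH]; simpl; [ring | rewrite IH; ring]. Qed.

Lemma fsum_minus n f g : fsum n (fun i => f i - g i) = fsum n f - fsum n g.
Proof. induction n as [|n IH]; simpl; [ring | rewrite IH; ring]. Qed.

Lemma fsum_mult_l n c f : fsum n (fun i => c * f i) = c * fsum n f.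
Proof. induction n as [|n IH]; simpl; [ring | rewrite IH; ring]. Qed.

Lemma fsum_const n c : fsum n (fun _ => c) = INR n * c.
Proof. induction n as [|n IH]; [simpl; ring | rewrite S_INR; simpl; rewrite IH; ring]. Qed.

Lemma fsum_S_sum_f_R0 n f : fsum (S n) f = sum_f_R0 f n.
Proof.
  induction n as [|n IH]; [simpl; ring|].
  change (fsum (S n) f + f (S n) = sum_f_R0 f n + f (S n)). now rewrite IH.
Qed.

Lemma fsum_nonneg n f : (forall i, (i < n)%nat -> 0 <= f i) -> 0 <= fsum n f.
Proof.
  intros H. rewrite <- (Rmult_0_r (INR n)), <- fsum_const. now apply fsum_le.
Qed.

Lemma fsum_ge_term n f j :
  (forall i, (i < n)%nat -> 0 <= f i) -> (j < n)%nat -> f j <= fsum n f.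
Proof.
  induction n as [|n IH]; intros H Hj; [lia|]. simpl.
  assert (0 <= fsum n f) by (apply fsum_nonneg; intros; apply H; lia).
  destruct (Nat.eq_dec j n) as [-> | Hne]; [lra|].
  assert (f j <= fsum n f) by (apply IH; [intros; apply H|]; lia).
  specialize (H n ltac:(lia)). lra.
Qed.

Lemma fsum_ctrl n j f : (j < n)%nat -> fsum n (fun i => INR (ctrl j i) * f i) = f j.
Proof.
  induction n as [|n IH]; intros Hj; [lia|]. simpl. unfold ctrl at 2.
  destruct (Nat.eq_dec j n) as [-> | Hne].
  - rewrite Nat.eqb_refl, (fsum_ext _ _ (fun _ => 0)), fsum_const; [simpl; ring|].
    intros i Hi. unfold ctrl. rewrite (proj2 (Nat.eqb_neq i n)) by lia. simpl. ring.
  - rewrite (proj2 (Nat.eqb_neq n j)), IH by lia. simpl. ring.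
Qed.

Lemma fsum_convex_le n w f B :
  (forall j, (j < n)%nat -> 0 <= w j) -> fsum n w = 1 ->
  (forall j, (j < n)%nat -> f j <= B) -> fsum n (fun j => w j * f j) <= B.
Proof.
  intros Hw Hw1 Hf.
  apply Rle_trans with (fsum n (fun j => B * w j)).
  - apply fsum_le. intros j Hj. rewrite Rmult_comm.
    apply Rmult_le_compat_r; auto.
  - rewrite fsum_mult_l, Hw1. lra.
Qed.

Definition dep_exp (a qi : R) (x : nat) : R :=
  fsum (S x) (fun d => dep_pmf x qi d * exp (a * INR (x - d))).

Lemma exp_next_i_factor a p qi x nu :
  exp_next_i a p qi x nu = (1 - p + p * exp (a * INR nu)) * dep_exp a qi x.
Proof.
  unfold exp_next_i, dep_exp. rewrite <- fsum_mult_l. apply fsum_ext. intros d _.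
  simpl. unfold arr_pmf. simpl.
  rewrite Nat.mul_0_r, Nat.add_0_r, Nat.mul_1_r, plus_INR, Rmult_plus_distr_l, exp_plus.
  ring.
Qed.

Lemma dep_exp_0 a qi : dep_exp a qi 0 = 1.
Proof. unfold dep_exp. simpl. rewrite Rmult_0_r, exp_0. ring. Qed.

Lemma dep_exp_S a qi n :
  dep_exp a qi (S n) = (qi / INR (S n) + (1 - qi / INR (S n)) * exp a) ^ S n.
Proof.
  set (u := qi / INR (S n)). rewrite binomial, <- fsum_S_sum_f_R0.
  apply fsum_ext. intros d _. unfold dep_pmf. fold u.
  rewrite Rmult_comm with (r1 := a), exp_INR_mult, Rpow_mult_distr. ring.
Qed.

(* With [u = qi / x], the base of [dep_exp_S] is [exp a * (1 - u * (1 - exp (- a)))],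
   and [1 - t <= exp (- t)] turns its [x]-th power into the bound. *)
Lemma dep_exp_le a qi n : 0 <= qi <= 1 ->
  dep_exp a qi (S n) <= exp (a * INR (S n) - qi * (1 - exp (- a))).
Proof.
  intros Hq. rewrite dep_exp_S.
  assert (Hx : 1 <= INR (S n)) by (rewrite S_INR; pose proof (pos_INR n); lra).
  set (x := INR (S n)) in *. set (u := qi / x).
  assert (Hu : 0 <= u <= 1).
  { unfold u. split; [unfold Rdiv; apply Rmult_le_pos; [lra | left; apply Rinv_0_lt_compat; lra]|].
    apply Rmult_le_reg_r with x; [lra|].
    unfold Rdiv. rewrite Rmult_assoc, Rinv_l by lra. nra. }
  assert (Hea : exp a * exp (- a) = 1) by (rewrite <- exp_plus, Rplus_opp_r; apply exp_0).
  assert (Hbase : u + (1 - u) * exp a = exp a * (1 - u * (1 - exp (- a)))).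
  { transitivity (u * (exp a * exp (- a)) + (1 - u) * exp a); [rewrite Hea|]; ring. }
  assert (Hle : u + (1 - u) * exp a <= exp (a - u * (1 - exp (- a)))).
  { rewrite Hbase. replace (a - u * (1 - exp (- a))) with (a + - (u * (1 - exp (- a)))) by ring.
    rewrite exp_plus.
    apply Rmult_le_compat_l; [left; apply exp_pos|].
    pose proof (exp_ineq1_le (- (u * (1 - exp (- a))))). lra. }
  pose proof (exp_pos a).
  eapply Rle_trans; [apply pow_incr; split; [nra | exact Hle]|].
  rewrite <- exp_INR_mult. fold x. right. f_equal. unfold u. field. lra.
Qed.

Definition busy_exp (a : R) (x : nat) : R := if Nat.eqb x 0 then 0 else exp (a * INR x).

Lemma busy_exp_nonneg a x : 0 <= busy_exp a x.
Proof. unfold busy_exp. destruct (Nat.eqb x 0); [lra | left; apply exp_pos]. Qed.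

Lemma exp_le_1_add_busy_exp a x : exp (a * INR x) <= 1 + busy_exp a x.
Proof.
  unfold busy_exp. destruct x as [|n]; simpl Nat.eqb.
  - simpl. rewrite Rmult_0_r, exp_0. lra.
  - lra.
Qed.

Lemma exp_next_i_drift a p qi x nu :
  0 <= a -> 0 <= p <= 1 -> 0 <= qi <= 1 -> (nu <= 1)%nat ->
  exp_next_i a p qi x nu - exp (a * INR x) <=
  INR nu * (p * (exp a - 1)) * exp (a * INR x)
    - (1 - exp (- (qi * (1 - exp (- a))))) * busy_exp a x.
Proof.
  intros Ha Hp Hq Hnu. rewrite exp_next_i_factor. unfold busy_exp.
  assert (Hea : 1 <= exp a) by (pose proof (exp_ineq1_le a); lra).
  assert (Hfactor : 1 - p + p * exp (a * INR nu) = 1 + INR nu * (p * (exp a - 1))).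
  { destruct nu as [|[|]]; [| | lia]; simpl; rewrite ?Rmult_0_r, ?Rmult_1_r, ?exp_0; ring. }
  assert (Hnu01 : 0 <= INR nu <= 1) by (split; [apply pos_INR | apply (le_INR _ 1); lia]).
  rewrite Hfactor. destruct x as [|n]; simpl Nat.eqb.
  - rewrite dep_exp_0. simpl INR. rewrite Rmult_0_r, exp_0. lra.
  - set (E := exp (a * INR (S n))).
    set (z := exp (- (qi * (1 - exp (- a))))).
    assert (HD : dep_exp a qi (S n) <= E * z).
    { unfold E, z. rewrite <- exp_plus. apply dep_exp_le, Hq. }
    assert (Hz : z <= 1).
    { unfold z. apply exp_le_1.
      assert (exp (- a) <= 1) by (apply exp_le_1; lra).
      assert (0 <= qi * (1 - exp (- a))) by (apply Rmult_le_pos; lra).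
      lra. }
    assert (HE : 0 < E) by apply exp_pos.
    assert (Hr : 0 <= INR nu * (p * (exp a - 1)))
      by (apply Rmult_le_pos; [|apply Rmult_le_pos]; lra).
    assert ((1 + INR nu * (p * (exp a - 1))) * dep_exp a qi (S n)
            <= (1 + INR nu * (p * (exp a - 1))) * (E * z))
      by (apply Rmult_le_compat_l; lra).
    assert (0 <= INR nu * (p * (exp a - 1)) * E * (1 - z))
      by (apply Rmult_le_pos; [apply Rmult_le_pos|]; lra).
    lra.
Qed.

Lemma exp_next_Phi_drift a p q I x j eps :
  0 <= a -> 0 <= p <= 1 -> (j < I)%nat ->
  (forall i, (i < I)%nat ->
     0 <= q i <= 1 /\ eps <= 1 - exp (- (q i * (1 - exp (- a))))) ->
  exp_next_Phi a p q I x j - Phi a I x <=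
  p * (exp a - 1) * exp (a * INR (x j)) - eps * fsum I (fun i => busy_exp a (x i)).
Proof.
  intros Ha Hp Hj Hq. unfold exp_next_Phi, Phi. rewrite <- fsum_minus.
  apply Rle_trans with (fsum I (fun i => INR (ctrl j i) * (p * (exp a - 1) * exp (a * INR (x i)))
                                         - eps * busy_exp a (x i))).
  - apply fsum_le. intros i Hi. destruct (Hq i Hi) as [Hqi Heps].
    assert (Hctrl : (ctrl j i <= 1)%nat) by (unfold ctrl; destruct (Nat.eqb i j); lia).
    eapply Rle_trans; [now apply exp_next_i_drift|].
    pose proof (Rmult_le_compat_r _ _ _ (busy_exp_nonneg a (x i)) Heps). lra.
  - rewrite fsum_minus, fsum_ctrl, fsum_mult_l by exact Hj. lra.
Qed.

Section BusyQueues.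

Variables (a : R) (I : nat) (x : nat -> nat).
Hypothesis Ha : 0 <= a.
Hypothesis Hbusy : exists i, (i < I)%nat /\ x i <> 0%nat.

Let busy_sum := fsum I (fun i => busy_exp a (x i)).

Lemma busy_sum_ge_1 : 1 <= busy_sum.
Proof.
  destruct Hbusy as [i [Hi Hxi]].
  apply Rle_trans with (busy_exp a (x i)).
  - unfold busy_exp. rewrite (proj2 (Nat.eqb_neq _ _) Hxi).
    pose proof (exp_ineq1_le (a * INR (x i))). pose proof (pos_INR (x i)).
    assert (0 <= a * INR (x i)) by (apply Rmult_le_pos; lra). lra.
  - apply (fsum_ge_term _ (fun i => busy_exp a (x i))); auto using busy_exp_nonneg.
Qed.

Lemma exp_le_busy_sum j : (j < I)%nat -> exp (a * INR (x j)) <= busy_sum.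
Proof.
  intros Hj. destruct (Nat.eqb (x j) 0) eqn:Hxj.
  - rewrite (proj1 (Nat.eqb_eq _ _) Hxj). simpl INR.
    rewrite Rmult_0_r, exp_0. apply busy_sum_ge_1.
  - apply Rle_trans with (busy_exp a (x j)).
    + unfold busy_exp. rewrite Hxj. lra.
    + apply (fsum_ge_term _ (fun i => busy_exp a (x i))); auto using busy_exp_nonneg.
Qed.

Lemma Phi_le_busy_sum : Phi a I x <= (INR I + 1) * busy_sum.
Proof.
  apply Rle_trans with (fsum I (fun i => 1 + busy_exp a (x i))).
  - apply fsum_le. intros i _. apply exp_le_1_add_busy_exp.
  - rewrite fsum_plus, fsum_const. fold busy_sum.
    pose proof busy_sum_ge_1. pose proof (pos_INR I). nra.
Qed.

End BusyQueues.

Lemma exp_next_Phi_contraction a p q I x j eps :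
  0 <= a -> 0 <= p <= 1 ->
  (forall i, (i < I)%nat ->
     0 <= q i <= 1 /\ eps <= 1 - exp (- (q i * (1 - exp (- a))))) ->
  p * (exp a - 1) <= eps ->
  (exists i, (i < I)%nat /\ x i <> 0%nat) -> (j < I)%nat ->
  exp_next_Phi a p q I x j
    <= Phi a I x - (eps - p * (exp a - 1)) / (INR I + 1) * Phi a I x.
Proof.
  intros Ha Hp Hq Heps Hbusy Hj.
  set (r := p * (exp a - 1)) in *.
  set (S := fsum I (fun i => busy_exp a (x i))).
  assert (Hr0 : 0 <= r) by (unfold r; pose proof (exp_ineq1_le a); apply Rmult_le_pos; lra).
  pose proof (exp_next_Phi_drift a p q I x j eps Ha Hp Hj Hq) as Hd.
  pose proof (Rmult_le_compat_l _ _ _ Hr0 (exp_le_busy_sum a I x Ha Hbusy j Hj)) as Hs.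
  pose proof (Phi_le_busy_sum a I x Ha Hbusy) as HPhi.
  fold r S in Hd; fold S in Hs, HPhi.
  assert (HI1 : 0 < INR I + 1) by (pose proof (pos_INR I); lra).
  assert (Hgap : (eps - r) / (INR I + 1) * Phi a I x <= (eps - r) * S).
  { unfold Rdiv. rewrite Rmult_assoc. apply Rmult_le_compat_l; [lra|].
    apply (Rmult_le_reg_l (INR I + 1)); [lra|].
    rewrite <- Rmult_assoc, Rinv_r by lra. lra. }
  lra.
Qed.

Lemma arrival_drift_lt a p Q :
  0 < a -> 0 < Q <= 1 -> p * (exp a - 1) < Q / 2 * (1 - exp (- a)) ->
  p * (exp a - 1) < 1 - exp (- (Q * (1 - exp (- a)))).
Proof.
  intros Ha HQ Hab.
  assert (exp (- a) < exp 0) by (apply exp_increasing; lra).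
  pose proof (exp_pos (- a)). rewrite exp_0 in *.
  pose proof (one_sub_exp_opp_gt_half (Q * (1 - exp (- a))) ltac:(split; nra)). lra.
Qed.

Lemma decreasing_between (q : nat -> R) I i :
  (forall i j, (i < j)%nat -> (j < I)%nat -> q j < q i) -> (i < I)%nat ->
  q (I - 1)%nat <= q i <= q 0%nat.
Proof.
  intros Hdec Hi. split.
  - destruct (Nat.eq_dec i (I - 1)) as [-> | Hne]; [lra|].
    left. apply Hdec; lia.
  - destruct i as [|i]; [lra|]. left. apply Hdec; lia.
Qed.

Theorem lemma1 (I : nat) (p a : R) (q : nat -> R)
  (HI : (1 <= I)%nat) (Hp0 : 0 < p) (Hp1 : p < 1)
  (Hq0 : q 0%nat < 1)
  (Hdec : forall i j : nat, (i < j)%nat -> (j < I)%nat -> q j < q i)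
  (HqI : 2 * p < q (I - 1)%nat)
  (Ha : 0 < a)
  (Hab : p * (exp a - 1) < q (I - 1)%nat / 2 * (1 - exp (- a))) :
  exists b : R, 0 < b /\
    forall (x : nat -> nat) (w : nat -> R),
      (exists i : nat, (i < I)%nat /\ x i <> 0%nat) ->
      (forall j : nat, 0 <= w j) ->
      fsum I w = 1 ->
      fsum I (fun j => w j * exp_next_Phi a p q I x j) - Phi a I x
        <= - b * Phi a I x.
Proof.
  set (Q := q (I - 1)%nat) in *.
  set (eps := 1 - exp (- (Q * (1 - exp (- a))))).
  assert (Hqi : forall i, (i < I)%nat -> Q <= q i <= 1).
  { intros i Hi. pose proof (decreasing_between q I i Hdec Hi) as Hb. fold Q in Hb. lra. }
  assert (Hr : p * (exp a - 1) < eps).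
  { apply arrival_drift_lt; [lra | split; [lra | apply Hqi; lia] | exact Hab]. }
  assert (Heps : forall i, (i < I)%nat ->
            0 <= q i <= 1 /\ eps <= 1 - exp (- (q i * (1 - exp (- a))))).
  { intros i Hi. destruct (Hqi i Hi). split; [lra|].
    assert (exp (- a) < 1) by (rewrite <- exp_0; apply exp_increasing; lra).
    pose proof (exp_le_compat (- (q i * (1 - exp (- a)))) (- (Q * (1 - exp (- a)))) ltac:(nra)).
    unfold eps. lra. }
  exists ((eps - p * (exp a - 1)) / (INR I + 1)). split.
  { apply Rdiv_lt_0_compat; [lra | pose proof (pos_INR I); lra]. }
  intros x w Hbusy Hw Hw1.
  pose proof (fsum_convex_le I w (exp_next_Phi a p q I x) _ (fun j _ => Hw j) Hw1
    (fun j Hj => exp_next_Phi_contraction a p q I x j eps ltac:(lra) ltac:(lra) Heps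
                   ltac:(lra) Hbusy Hj)).
  lra.
Qed.
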